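(* Consider the control-affine system described in the context, with safe set $\mathcal{C}=\{x\in\mathbb{R}^{m+n}: h(x)\geq 0\}$. Suppose that: (i) Assumptions A, B and C (see context) hold; (ii) there exist positive constants $\gamma,\epsilon_1,\epsilon_2>0$ and $\gamma^\theta_i,\gamma^\lambda_i>0$, $i\in[n]$, such that for every $x\in\mathcal{C}$ the set $$K_{BF}(x)=\{\mathfrak{u}\in\mathbb{R}^n : \Psi_0(x)+\Psi_1(x)\mathfrak{u}\geq 0\}$$ is non-empty, where $$\Psi_0(x)=\mathcal{M}(x)+\sum_{i=1}^n h_{x_2,i}(x)\,\theta_i^{0\top}\varphi_i(x)-n(\epsilon_1+\epsilon_2)+\gamma\Big[h(x)-\sum_{i=1}^n\Big(\frac{\bar\mu_i^2}{2\gamma_i^\theta}+\frac{\bar\nu_i^2}{2\gamma_i^\lambda}\Big)\Big],$$ $$\Psi_1(x)=\big[h_{x_2,1}^2(g_1+\lambda_1^{0\top}\psi_1),\ h_{x_2,2}^2(g_2+\lambda_2^{0\top}\psi_2),\ \dots,\ h_{x_2,n}^2(g_n+\lambda_n^{0\top}\psi_n)\big]\in\mathbb{R}^{1\times n}$$ (all functions evaluated at $x$); (iii) for each $i\in[n]$, the scalar estimates $\hat\mu_i,\hat\nu_i$ evolve according to $$\dot{\hat\mu}_i=-\gamma\hat\mu_i+\gamma_i^\theta|h_{x_2,i}|\,\|\varphi_i\|,\qquad \dot{\hat\nu}_i=-\gamma\hat\nu_i+\gamma_i^\lambda h_{x_2,i}^2|u_{0,i}|\,\|\psi_i\|,$$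 with $\hat\mu_i(0)>0$, $\hat\nu_i(0)>0$, where $u_0=[u_{0,1},\dots,u_{0,n}]^\top$ is a Lipschitz function satisfying $u_0\in K_{BF}(x)$; (iv) $h(x(0))\geq \sum_{i=1}^n\Big(\frac{\hat\mu_i(0)^2+\bar\mu_i^2}{2\gamma_i^\theta}+\frac{\hat\nu_i(0)^2+\bar\nu_i^2}{2\gamma_i^\lambda}\Big)$. Then the control input $u=h_{x_2}^\top\odot s(u_0)\in\mathbb{R}^n$, where $s(u_0)=[s_1(u_{0,1}),\dots,s_n(u_{0,n})]^\top$ with $$s_i(u_{0,i})=u_{0,i}+\frac{\kappa_{1,i}}{b_i}+\frac{\kappa_{2,i}^2u_{0,i}^2}{b_i(\kappa_{2,i}|h_{x_2,i}||u_{0,i}|+\epsilon_2)},\quad \kappa_{1,i}=\frac{\hat\mu_i^2\|\varphi_i\|^2}{\hat\mu_i\|\varphi_i\||h_{x_2,i}|+\epsilon_1},\quad \kappa_{2,i}=\hat\nu_i\|\psi_i\||h_{x_2,i}|,$$ ensures $h(x(t))\geq 0$ for all $t>0$ along the closed-loop trajectory.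
   Context: Let $m\ge 0$, $n\ge 1$ be integers, $[n]=\{1,\dots,n\}$. The state is $x=(x_1,x_2)\in\mathbb{R}^{m+n}$, $x_1\in\mathbb{R}^m$, $x_2\in\mathbb{R}^n$, the input $u\in\mathbb{R}^n$, and the system is $$\dot x=f(x)+f_u(x)+\begin{pmatrix}0_m\\ f_\theta(x)\end{pmatrix}+\begin{pmatrix}0_{m\times n}\\ g(x)+g_\lambda(x)\end{pmatrix}u,$$ where $f:\mathbb{R}^{m+n}\to\mathbb{R}^{m+n}$ is a known Lipschitz function, $f_u:\mathbb{R}^{m+n}\to\mathbb{R}^{m+n}$ is an unknown Lipschitz function, $f_\theta(x)=[\theta_1^\top\varphi_1(x),\dots,\theta_n^\top\varphi_n(x)]^\top$, $g(x)=\mathrm{diag}(g_1(x),\dots,g_n(x))$, $g_\lambda(x)=\mathrm{diag}(\lambda_1^\top\psi_1(x),\dots,\lambda_n^\top\psi_n(x))$, with known functions $g_i:\mathbb{R}^{m+n}\to\mathbb{R}$, $\varphi_i:\mathbb{R}^{m+n}\to\mathbb{R}^{p_i}$, $\psi_i:\mathbb{R}^{m+n}\to\mathbb{R}^{q_i}$, and unknown constant parameter vectors $\theta_i\in\mathbb{R}^{p_i}$, $\lambda_i\in\mathbb{R}^{q_i}$. The function $h:\mathbb{R}^{m+n}\to\mathbb{R}$ is continuously differentiable; $h_x=\partial h/\partial x\in\mathbb{R}^{1\times(m+n)}$ and $h_{x_2}=\partial h/\partial x_2\in\mathbb{R}^{1\times n}$ are row vectors with entries $h_{x,j}$, $h_{x_2,i}$.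 Norms are Euclidean; $\odot$ is the entrywise (Hadamard) product; vector inequalities are entrywise. Assumption A: there are known functions $\underline f_u,\overline f_u:\mathbb{R}^{m+n}\to\mathbb{R}^{m+n}$ with $\underline f_u(x)\le f_u(x)\le\overline f_u(x)$ for all $x$; write $\underline f_{u,j},\overline f_{u,j}$ for their entries. Assumption B: for each $i\in[n]$ there are known vectors with $\underline\theta_i\le\theta_i\le\overline\theta_i$ and $\underline\lambda_i\le\lambda_i\le\overline\lambda_i$. Assumption C: for each $i\in[n]$ there is a constant $b_i>0$ such that $g_i(x)+\lambda_i^\top\psi_i(x)\geq b_i$ for all $x\in\mathcal{C}$. Fix nominal values $\theta_i^0,\lambda_i^0$ with $\underline\theta_i\le\theta_i^0\le\overline\theta_i$, $\underline\lambda_i\le\lambda_i^0\le\overline\lambda_i$, and set $\bar\mu_i=\sqrt{\sum_{j=1}^{p_i}\max\{((\overline\theta_i)_j-(\theta_i^0)_j)^2,((\underline\theta_i)_j-(\theta_i^0)_j)^2\}}$, $\bar\nu_i=\sqrt{\sum_{j=1}^{q_i}\max\{((\overline\lambda_i)_j-(\lambda_i^0)_j)^2,((\underline\lambda_i)_j-(\lambda_i^0)_j)^2\}}$ (so that $\|\theta_i-\theta_i^0\|\le\bar\mu_i$, $\|\lambda_i-\lambda_i^0\|\le\bar\nu_i$). Define $\mathcal{M}(x)=h_x(x)f(x)+\sum_{j=1}^{m+n}\min\{h_{x,j}(x)\underline f_{u,j}(x),\,h_{x,j}(x)\overline f_{u,j}(x)\}$. *)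

From HB Require Import structures.
From mathcomp Require Import all_boot all_order all_algebra.
From mathcomp Require Import all_classical all_reals all_analysis.
Set Implicit Arguments. Unset Strict Implicit. Unset Printing Implicit Defensive.
Import Order.TTheory GRing.Theory Num.Theory.
Import numFieldNormedType.Exports.
Local Open Scope ring_scope.
Local Open Scope classical_set_scope.

Definition dotv (R : realType) (k : nat) (a b : 'I_k -> R) : R :=
  \sum_(j < k) a j * b j.
Definition enorm (R : realType) (k : nat) (a : 'I_k -> R) : R :=
  Num.sqrt (\sum_(j < k) a j ^+ 2).

Definition partial (R : realType) (N : nat) (h : 'rV[R]_N -> R)
  (x : 'rV[R]_N) (j : 'I_N) : R := 'D_(delta_mx 0 j) h x.

Definition hx2 (R : realType) (m n : nat) (h : 'rV[R]_(m + n) -> R)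
  (x : 'rV[R]_(m + n)) (i : 'I_n) : R := partial h x (rshift m i).

(* \bar mu_i and \bar nu_i from the parameter box and nominal value *)
Definition bound_rad (R : realType) (k : nat) (lo hi nom : 'I_k -> R) : R :=
  Num.sqrt (\sum_(j < k) Num.max ((hi j - nom j) ^+ 2) ((lo j - nom j) ^+ 2)).

Definition Mfun (R : realType) (N : nat) (h : 'rV[R]_N -> R)
  (f fulo fuhi : 'rV[R]_N -> 'rV[R]_N) (x : 'rV[R]_N) : R :=
  \sum_(j < N) partial h x j * f x 0 j
  + \sum_(j < N) Num.min (partial h x j * fulo x 0 j) (partial h x j * fuhi x 0 j).

Definition sys_rhs (R : realType) (m n : nat) (p q : 'I_n -> nat)
  (f fu : 'rV[R]_(m + n) -> 'rV[R]_(m + n))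
  (theta : forall i : 'I_n, 'I_(p i) -> R)
  (phi : forall i : 'I_n, 'rV[R]_(m + n) -> 'I_(p i) -> R)
  (g : 'I_n -> 'rV[R]_(m + n) -> R)
  (lam : forall i : 'I_n, 'I_(q i) -> R)
  (psi : forall i : 'I_n, 'rV[R]_(m + n) -> 'I_(q i) -> R)
  (x : 'rV[R]_(m + n)) (u : 'I_n -> R) : 'rV[R]_(m + n) :=
  \row_(j < m + n)
    (f x 0 j + fu x 0 j +
     match fintype.split j with
     | inl _ => 0
     | inr i => dotv (theta i) (phi i x)
                + (g i x + dotv (lam i) (psi i x)) * u i
     end).

Definition kappa1 (R : realType) (muh nphi hx2i eps1 : R) : R :=
  muh ^+ 2 * nphi ^+ 2 / (muh * nphi * `|hx2i| + eps1).
Definition kappa2 (R : realType) (nuh npsi hx2i : R) : R :=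
  nuh * npsi * `|hx2i|.
Definition s_fun (R : realType) (u0i k1 k2 bi hx2i eps2 : R) : R :=
  u0i + k1 / bi + k2 ^+ 2 * u0i ^+ 2 / (bi * (k2 * `|hx2i| * `|u0i| + eps2)).
Definition ctrl (R : realType) (u0i muh nuh nphi npsi bi hx2i eps1 eps2 : R) : R :=
  hx2i * s_fun u0i (kappa1 muh nphi hx2i eps1) (kappa2 nuh npsi hx2i) bi hx2i eps2.

(* Lyapunov argument for V = h(x) - sum_i ((mu_i - mubar_i)^2 / (2 gth_i)
   + (nu_i - nubar_i)^2 / (2 glam_i)), where mu_i, nu_i are the estimates.
   Wherever h(x) >= 0, Cauchy-Schwarz bounds the parameter mismatch of channel i
   by mubar_i |h_{x2,i}| |phi_i| (resp. nubar_i h_{x2,i}^2 |u0_i| |psi_i|).  Since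
   g_i + lam_i.psi_i >= b_i and z - eps <= z^2 / (z + eps), the robustifying
   terms of s_i contribute at least mu_i |h_{x2,i}| |phi_i| - eps1 (resp. with nu_i
   and eps2), and the update laws contribute the missing
   (mubar_i - mu_i) |h_{x2,i}| |phi_i|, so that V' + gamma V >= Psi0 + Psi1 u0 >= 0.
   By Gronwall, V(0) <= e^(gamma t) V(t) as long as h stays nonnegative.  The
   estimates stay positive and, by the initial condition,
   V(0) >= sum_i (mu_i(0) mubar_i / gth_i + nu_i(0) nubar_i / glam_i), which
   forces h(x(t)) > 0; a first-exit argument makes this global. *)

From HB Require Import structures.
From mathcomp Require Import all_boot all_order all_algebra.
From mathcomp Require Import all_classical all_reals all_analysis.
From mathcomp Require Import ring lra.
Set Implicit Arguments.
Unset Strict Implicit.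
Unset Printing Implicit Defensive.

Import Order.TTheory GRing.Theory Num.Theory.
Import numFieldNormedType.Exports.
Local Open Scope ring_scope.
Local Open Scope classical_set_scope.

Section EuclideanBounds.
Variables (R : realType) (k : nat).
Implicit Types a b lo hi th nom : 'I_k -> R.

Lemma sum_sqr_ge0 a : 0 <= \sum_(j < k) a j ^+ 2.
Proof. by apply: sumr_ge0 => j _; apply: sqr_ge0. Qed.

Lemma sqr_sum_mul_le a b :
  (\sum_(j < k) a j * b j) ^+ 2 <= (\sum_(j < k) a j ^+ 2) * \sum_(j < k) b j ^+ 2.
Proof.
set A := \sum_(j < k) a j ^+ 2; set B := \sum_(j < k) b j ^+ 2.
set S := \sum_(j < k) a j * b j.
have quad_ge0 t : 0 <= t ^+ 2 * A + 2 * t * S + B.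
  have -> : t ^+ 2 * A + 2 * t * S + B = \sum_(j < k) (t * a j + b j) ^+ 2.
    rewrite /A /B /S !mulr_sumr -!big_split /=.
    by apply: eq_bigr => j _; ring.
  exact: sum_sqr_ge0.
have [A_gt0|A_le0] := ltP 0 A.
  have := quad_ge0 (- S / A).
  have -> : (- S / A) ^+ 2 * A + 2 * (- S / A) * S + B = B - S ^+ 2 / A.
    by field; rewrite gt_eqF.
  by rewrite subr_ge0 ler_pdivrMr // mulrC.
have a0 j : a j = 0.
  apply/eqP; rewrite -sqrf_eq0 eq_le sqr_ge0 andbT (le_trans _ A_le0) //.
  by rewrite /A (bigD1 j) //= lerDl sumr_ge0 // => i _; apply: sqr_ge0.
have -> : S = 0 by rewrite /S big1 // => j _; rewrite a0 mul0r.
by rewrite expr0n mulr_ge0 ?sum_sqr_ge0.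
Qed.

Lemma enorm_ge0 a : 0 <= enorm a.
Proof. exact: sqrtr_ge0. Qed.

Lemma normr_dotv_le a b : `|dotv a b| <= enorm a * enorm b.
Proof.
rewrite /enorm -sqrtrM ?sum_sqr_ge0 // -sqrtr_sqr ler_sqrt ?mulr_ge0 ?sum_sqr_ge0 //.
exact: sqr_sum_mul_le.
Qed.

Lemma enorm_sub_le_bound_rad lo hi th nom :
  (forall j, lo j <= th j <= hi j) -> (forall j, lo j <= nom j <= hi j) ->
  enorm (fun j => th j - nom j) <= bound_rad lo hi nom.
Proof.
move=> th_in nom_in; rewrite ler_sqrt; last first.
  by apply: sumr_ge0 => j _; rewrite le_max sqr_ge0.
apply: ler_sum => j _; rewrite le_max.
move: (th_in j) (nom_in j) => /andP[lo_th th_hi] /andP[lo_nom nom_hi].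
by apply/orP; have [le_nom_th|lt_th_nom] := leP (nom j) (th j); [left | right]; nra.
Qed.

Lemma dotv_dev_le lo hi th nom a :
  (forall j, lo j <= th j <= hi j) -> (forall j, lo j <= nom j <= hi j) ->
  `|dotv th a - dotv nom a| <= bound_rad lo hi nom * enorm a.
Proof.
move=> th_in nom_in.
have -> : dotv th a - dotv nom a = dotv (fun j => th j - nom j) a.
  by rewrite /dotv -sumrB; apply: eq_bigr => j _; rewrite mulrBl.
apply: le_trans (normr_dotv_le _ _) _.
by rewrite ler_wpM2r ?enorm_ge0 ?enorm_sub_le_bound_rad.
Qed.

End EuclideanBounds.

Section Comparison.
Variable R : realType.
Implicit Types (F : R -> R) (gam c t : R).

Lemma is_derive_expR_scale gam t :
  is_derive t 1 (fun s => expR (gam * s)) (expR (gam * t) * gam).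
Proof.
apply: (@is_derive1_comp R expR (fun s => gam * s)).
by rewrite -[X in is_derive _ _ _ X]mulr1; apply: is_deriveZ.
Qed.

(* Grönwall: [expR (gam * s) * F s] is nondecreasing on [0, c]. *)
Lemma le_expR_mul_of_rate F gam c : 0 <= c ->
  {within `[0, c], continuous F} ->
  (forall t, 0 < t < c -> derivable F t 1 /\ 0 <= 'D_1 F t + gam * F t) ->
  F 0 <= expR (gam * c) * F c.
Proof.
move=> c0 Fc F_rate.
pose G s := expR (gam * s) * F s.
have dG t : 0 < t < c -> is_derive t 1 G (expR (gam * t) * ('D_1 F t + gam * F t)).
  move=> /F_rate[dF _].
  apply: is_derive_eq (is_deriveM (is_derive_expR_scale gam t) (derivableP dF)) _.
  by rewrite /GRing.scale /=; ring.
have := @ger0_derive1_le_cc R G 0 c _ _ _ 0 c.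
rewrite /G mulr0 expR0 mul1r; apply => //.
- by move=> t; rewrite in_itv /= => /dG[].
- move=> t; rewrite in_itv /= => tc; rewrite derive1E; have := dG t tc => /@derive_val ->.
  by rewrite mulr_ge0 ?expR_ge0 //; case: (F_rate t tc).
- move=> t; apply: (@continuousM R (subspace `[0, c]) _ F t); last exact: Fc.
  apply: continuous_subspaceT => s.
  apply/differentiable_continuous/derivable1_diffP.
  by have [] := is_derive_expR_scale gam s.
- by rewrite in_itv /= lexx.
- by rewrite in_itv /= lexx c0.
Qed.

Lemma gt0_of_rate F gam r :
  {within `[0, +oo[, continuous F} ->
  (forall t, 0 < t -> derivable F t 1 /\ 0 <= 'D_1 F t + gam * F t) ->
  0 < F 0 -> 0 <= r -> 0 < F r.
Proof.
move=> Fc F_rate F0 r0.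
have : F 0 <= expR (gam * r) * F r.
  apply: le_expR_mul_of_rate => // [|t /andP[t0 _]]; last exact: F_rate.
  by apply: continuous_subspaceW Fc; apply: subset_itv; rewrite ?bnd_simp.
by move=> /(lt_le_trans F0); rewrite pmulr_rgt0 ?expR_gt0.
Qed.

Lemma gt0_continuous_induction F :
  {within `[0, +oo[, continuous F} ->
  (forall c, 0 <= c -> (forall s, 0 <= s < c -> 0 < F s) -> 0 < F c) ->
  forall t, 0 <= t -> 0 < F t.
Proof.
move=> Fc step t t0; rewrite ltNge; apply/negP => Ft.
(* [inf Z] is the first time at which [F] is nonpositive: [step] makes [F] positive
   there, hence near it by continuity. *)
pose Z := [set s | 0 <= s <= t /\ F s <= 0].
have Zt : Z t by split; rewrite ?t0 ?lexx.
have Z_lb : has_lbound Z by exists 0 => s [/andP[]].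
have Z_inf : has_inf Z by split => //; exists t.
have ts0 : 0 <= inf Z by apply: lb_le_inf (proj1 Z_inf) _ => s [/andP[]].
have F_pos s : 0 <= s < inf Z -> 0 < F s.
  case/andP=> s0 s_lt; rewrite ltNge; apply/negP => Fs.
  have Zs : Z s by split; rewrite // s0 (le_trans (ltW s_lt)) // ge_inf.
  by move: s_lt; rewrite ltNge ge_inf.
have F_near : \forall s \near inf Z, 0 <= s -> 0 < F s.
  have := cvgr_gt (F (inf Z)) (Fc (inf Z)) 0 (step _ ts0 F_pos).
  move=> /(_ (nbhs_filter (inf Z : subspace `[0, +oo[))).
  case: (@nbhs_subspaceP R [set` `[0, +oo[%R] (inf Z)) => [_|]; last first.
    by rewrite /= in_itv /= ts0.
  move=> F_within; near=> s => s0.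
  have : `[0, +oo[%classic s -> 0 < F s by near: s.
  by apply; rewrite /= in_itv /= s0.
have /nbhs_ballP[d /= d0 F_ball] := F_near.
have [z Zz z_lt] := inf_adherent d0 Z_inf.
have ts_z := ge_inf Z_lb Zz; case: Zz => /andP[z0 _] Fz.
suff : 0 < F z by rewrite ltNge Fz.
by apply: F_ball z0; rewrite /ball /= distrC ger0_norm ?subr_ge0 // ltrBlDl.
Unshelve. all: by end_near.
Qed.

End Comparison.

Section Gradient.
Variables (R : realType) (N : nat).
Implicit Types (h : 'rV[R]_N -> R) (f fu fulo fuhi : 'rV[R]_N -> 'rV[R]_N).

Lemma is_derive_comp_partial h (x : R -> 'rV[R]_N) t :
  differentiable h (x t) -> derivable x t 1 ->
  is_derive t 1 (h \o x) (\sum_(j < N) partial h (x t) j * 'D_1 x t 0 j).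
Proof.
move=> dh dx; have dx' : differentiable x t by apply/derivable1_diffP.
have dhx : differentiable (h \o x) t by apply: differentiable_comp.
apply: DeriveDef; first exact/derivable1_diffP.
have dx1 : 'd x t 1 = 'D_1 x t by rewrite deriveE.
rewrite deriveE // diff_comp //= dx1.
rewrite [X in 'd h (x t) X](row_sum_delta ('D_1 x t)) linear_sum /=.
by apply: eq_bigr => j _; rewrite linearZ /= mulrC /partial (deriveE (f:=h)).
Qed.

Lemma Mfun_le_sum_partial h f fu fulo fuhi y :
  (forall j, fulo y 0 j <= fu y 0 j <= fuhi y 0 j) ->
  Mfun h f fulo fuhi y <= \sum_(j < N) partial h y j * (f y 0 j + fu y 0 j).
Proof.
move=> fu_in; rewrite /Mfun -big_split /=; apply: ler_sum => j _.
rewrite mulrDr lerD2l ge_min; have /andP[lo_fu fu_hi] := fu_in j.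
have [hj_ge0|hj_lt0] := leP 0 (partial h y j).
  by rewrite ler_wpM2l.
by rewrite orbC ler_wnM2l // ltW.
Qed.

End Gradient.

Lemma sum_partial_sys_rhs (R : realType) (m n : nat) (p q : 'I_n -> nat)
  (f fu : 'rV[R]_(m + n) -> 'rV[R]_(m + n))
  (theta : forall i : 'I_n, 'I_(p i) -> R)
  (phi : forall i : 'I_n, 'rV[R]_(m + n) -> 'I_(p i) -> R)
  (g : 'I_n -> 'rV[R]_(m + n) -> R)
  (lam : forall i : 'I_n, 'I_(q i) -> R)
  (psi : forall i : 'I_n, 'rV[R]_(m + n) -> 'I_(q i) -> R)
  (h : 'rV[R]_(m + n) -> R) (y : 'rV[R]_(m + n)) (u : 'I_n -> R) :
  \sum_(j < m + n) partial h y j * sys_rhs f fu theta phi g lam psi y u 0 j =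
  \sum_(j < m + n) partial h y j * (f y 0 j + fu y 0 j) +
  \sum_(i < n) hx2 h y i *
    (dotv (theta i) (phi i y) + (g i y + dotv (lam i) (psi i y)) * u i).
Proof.
under eq_bigr => j _ do rewrite mxE mulrDr.
rewrite big_split /=; congr (_ + _).
rewrite big_split_ord /= big1 ?add0r => [|j _].
  by apply: eq_bigr => i _; rewrite (unsplitK (inr i)).
by rewrite (unsplitK (inl j)) mulr0.
Qed.

Section ScalarBounds.
Variable R : realFieldType.
Implicit Types a b c e k w z G mh mb gam : R.

Lemma sub_le_sqr_div_add z e : 0 <= z -> 0 < e -> z - e <= z ^+ 2 / (z + e).
Proof. by move=> z0 e0; rewrite ler_pdivlMr; [nra | lra]. Qed.

Lemma sub_le_gain_sqr_div_add G b z e : 0 < b -> b <= G -> 0 <= z -> 0 < e ->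
  z - e <= G / b * (z ^+ 2 / (z + e)).
Proof.
move=> b0 bG z0 e0; apply: le_trans (sub_le_sqr_div_add z0 e0) _.
by rewrite ler_peMl ?ler_pdivlMr ?mul1r ?mul0r ?sqr_ge0 //; lra.
Qed.

Lemma mul_ge_oppr_normr_mul c w b : `|w| <= b -> - (`|c| * b) <= c * w.
Proof.
move=> wb; rewrite lerNl -mulrN; apply: le_trans (ler_norm _) _.
by rewrite normrM normrN ler_wpM2l.
Qed.

(* One channel of [surplus]: [w] is the parameter mismatch, [r] the robustifying
   term of the control, the rest comes from the update law of the estimate. *)
Lemma adaptive_channel_ge0 gam k mh mb c w r e : 0 <= gam -> 0 < k ->
  - (mb * c) <= w -> mh * c - e <= r ->
  0 <= w + r + e + gam * (mb ^+ 2 / (2 * k))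
       - 2 * (mh - mb) * (- gam * mh + k * c) / (2 * k)
       - gam * ((mh - mb) ^+ 2 / (2 * k)).
Proof.
move=> gam0 k0 w_ge r_ge.
have -> : w + r + e + gam * (mb ^+ 2 / (2 * k))
       - 2 * (mh - mb) * (- gam * mh + k * c) / (2 * k)
       - gam * ((mh - mb) ^+ 2 / (2 * k))
     = w + r + e - mh * c + mb * c + gam * mh ^+ 2 / (2 * k).
  by field; rewrite gt_eqF.
have : 0 <= gam * mh ^+ 2 / (2 * k).
  by apply: divr_ge0; [rewrite mulr_ge0 ?sqr_ge0 | lra].
lra.
Qed.

Lemma estimate_term_gt0 a a' mb k E : 0 < a -> 0 < a' -> 0 <= mb -> 0 < k -> 0 < E ->
  0 < a * mb / k + E * ((a' - mb) ^+ 2 / (2 * k)).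
Proof.
move=> a0 a'0 mb0 k0 E0.
have [mb_gt0|mb_le0] := ltP 0 mb.
  by rewrite ltr_pwDl ?divr_gt0 ?mulr_gt0 // mulr_ge0 ?divr_ge0 ?sqr_ge0 //; lra.
have -> : mb = 0 by apply/eqP; rewrite eq_le mb_le0 mb0.
by rewrite mulr0 mul0r add0r subr0 mulr_gt0 ?divr_gt0 ?exprn_gt0 //; lra.
Qed.

End ScalarBounds.

Section SquaredDeviation.
Variable R : realType.

Lemma continuous_sqr_sub_div (T : topologicalType) (F : T -> R) (c d : R) :
  continuous F -> continuous (fun y => (F y - c) ^+ 2 / d).
Proof.
move=> Fc y; apply: cvgMr_tmp; rewrite expr2.
by apply: cvgM; apply: cvgB (Fc y) (cvg_cst _).
Qed.

Lemma is_derive_sqr_sub_div (F : R -> R) (c d s dF : R) :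
  is_derive s 1 F dF ->
  is_derive s 1 (fun y => (F y - c) ^+ 2 / d) (2 * (F s - c) * dF / d).
Proof.
move=> F_der.
have -> : (fun y => (F y - c) ^+ 2 / d) = (F - cst c) * (F - cst c) * cst d^-1.
  by apply/funext => y /=; rewrite expr2.
apply: is_derive_eq.
by rewrite /GRing.scale /= -[(F - cst c) s]/(F s - c); ring.
Qed.

End SquaredDeviation.

Section AdaptiveRobustBarrier.
(* Without implicit arguments, so that the index [i] of [theta i j] stays explicit. *)
Unset Implicit Arguments.
Variables (R : realType) (m n : nat) (p q : 'I_n -> nat).
Variables (f fu fulo fuhi : 'rV[R]_(m + n) -> 'rV[R]_(m + n)).
Variables (theta theta0 thlo thhi : forall i : 'I_n, 'I_(p i) -> R).
Variables (lam lam0 lamlo lamhi : forall i : 'I_n, 'I_(q i) -> R).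
Variable phi : forall i : 'I_n, 'rV[R]_(m + n) -> 'I_(p i) -> R.
Variable psi : forall i : 'I_n, 'rV[R]_(m + n) -> 'I_(q i) -> R.
Variables (g : 'I_n -> 'rV[R]_(m + n) -> R) (h : 'rV[R]_(m + n) -> R).
Variables (b : 'I_n -> R) (gamma eps1 eps2 : R) (gth glam : 'I_n -> R).
Variables (u0 : 'rV[R]_(m + n) -> 'rV[R]_n) (x : R -> 'rV[R]_(m + n)).
Variables (muh nuh : 'I_n -> R -> R).

Hypothesis n_gt0 : (0 < n)%N.
Hypothesis h_diff : forall y, differentiable h y.
Hypothesis fu_in : forall y j, fulo y 0 j <= fu y 0 j <= fuhi y 0 j.
Hypothesis theta_in : forall i j, thlo i j <= theta i j <= thhi i j.
Hypothesis lam_in : forall i j, lamlo i j <= lam i j <= lamhi i j.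
Hypothesis theta0_in : forall i j, thlo i j <= theta0 i j <= thhi i j.
Hypothesis lam0_in : forall i j, lamlo i j <= lam0 i j <= lamhi i j.
Hypothesis b_gt0 : forall i, 0 < b i.
Hypothesis b_le_gain : forall i y, 0 <= h y -> b i <= g i y + dotv (lam i) (psi i y).
Hypotheses (gamma_gt0 : 0 < gamma) (eps1_gt0 : 0 < eps1) (eps2_gt0 : 0 < eps2).
Hypotheses (gth_gt0 : forall i, 0 < gth i) (glam_gt0 : forall i, 0 < glam i).

Let mubar i := bound_rad (thlo i) (thhi i) (theta0 i).
Let nubar i := bound_rad (lamlo i) (lamhi i) (lam0 i).
Let Psi0 y :=
  Mfun h f fulo fuhi y
  + \sum_(i < n) hx2 h y i * dotv (theta0 i) (phi i y)
  - n%:R * (eps1 + eps2)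
  + gamma * (h y - \sum_(i < n) (mubar i ^+ 2 / (2 * gth i)
                                 + nubar i ^+ 2 / (2 * glam i))).
Let Psi1u y (v : 'I_n -> R) :=
  \sum_(i < n) hx2 h y i ^+ 2 * (g i y + dotv (lam0 i) (psi i y)) * v i.
Hypothesis u0_in_KBF :
  forall y, 0 <= h y -> 0 <= Psi0 y + Psi1u y (fun i => u0 y 0 i).

Let u t i := ctrl (u0 (x t) 0 i) (muh i t) (nuh i t)
                  (enorm (phi i (x t))) (enorm (psi i (x t)))
                  (b i) (hx2 h (x t) i) eps1 eps2.
Let muh_rate i t :=
  - gamma * muh i t + gth i * `|hx2 h (x t) i| * enorm (phi i (x t)).
Let nuh_rate i t :=
  - gamma * nuh i t
  + glam i * hx2 h (x t) i ^+ 2 * `|u0 (x t) 0 i| * enorm (psi i (x t)).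

Hypothesis x_cont : {within `[0, +oo[, continuous x}.
Hypothesis muh_cont : forall i, {within `[0, +oo[, continuous (muh i)}.
Hypothesis nuh_cont : forall i, {within `[0, +oo[, continuous (nuh i)}.
Hypothesis x_ode : forall t, 0 < t ->
  derivable x t 1 /\ 'D_1 x t = sys_rhs f fu theta phi g lam psi (x t) (u t).
Hypothesis muh_ode : forall i t, 0 < t ->
  derivable (muh i) t 1 /\ 'D_1 (muh i) t = muh_rate i t.
Hypothesis nuh_ode : forall i t, 0 < t ->
  derivable (nuh i) t 1 /\ 'D_1 (nuh i) t = nuh_rate i t.
Hypotheses (muh0_gt0 : forall i, 0 < muh i 0) (nuh0_gt0 : forall i, 0 < nuh i 0).
Hypothesis h_x0_ge :
  \sum_(i < n) ((muh i 0 ^+ 2 + mubar i ^+ 2) / (2 * gth i)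
               + (nuh i 0 ^+ 2 + nubar i ^+ 2) / (2 * glam i)) <= h (x 0).

Set Implicit Arguments.

Lemma muh_gt0 i t : 0 <= t -> 0 < muh i t.
Proof.
apply: (gt0_of_rate (gam := gamma) (muh_cont i) _ (muh0_gt0 i)).
move=> s /(muh_ode i)[muh_der ->].
split=> //; rewrite /muh_rate addrAC mulNr addNr add0r.
by rewrite !mulr_ge0 ?enorm_ge0 // ltW.
Qed.

Lemma nuh_gt0 i t : 0 <= t -> 0 < nuh i t.
Proof.
apply: (gt0_of_rate (gam := gamma) (nuh_cont i) _ (nuh0_gt0 i)).
move=> s /(nuh_ode i)[nuh_der ->].
split=> //; rewrite /nuh_rate addrAC mulNr addNr add0r.
by rewrite mulr_ge0 ?enorm_ge0 // mulr_ge0 // mulr_ge0 ?sqr_ge0 // ltW.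
Qed.

Lemma h_x_cont : {within `[0, +oo[, continuous (h \o x)}.
Proof.
by move=> t; apply: continuous_comp (x_cont t) _; apply/differentiable_continuous.
Qed.

Let est_energy s := \sum_(i < n) ((muh i s - mubar i) ^+ 2 / (2 * gth i)
                                  + (nuh i s - nubar i) ^+ 2 / (2 * glam i)).
Let V s := h (x s) - est_energy s.

Lemma V_cont : {within `[0, +oo[, continuous V}.
Proof.
apply: within_continuousB h_x_cont _.
apply: continuous_big => [|i _]; first exact: add_continuous.
exact: within_continuousD (continuous_sqr_sub_div (muh_cont i))
                          (continuous_sqr_sub_div (nuh_cont i)).
Qed.

Lemma is_derive_V (s : R) : 0 < s ->
  is_derive s 1 V (\sum_(j < m + n) partial h (x s) j * 'D_1 x s 0 j
    - \sum_(i < n) (2 * (muh i s - mubar i) * muh_rate i s / (2 * gth i)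
                    + 2 * (nuh i s - nubar i) * nuh_rate i s / (2 * glam i))).
Proof.
move=> s_gt0; have [x_der _] := x_ode s s_gt0.
have h_x_der := is_derive_comp_partial (h_diff (x s)) x_der.
have est_der : is_derive s 1 est_energy
    (\sum_(i < n) (2 * (muh i s - mubar i) * muh_rate i s / (2 * gth i)
                   + 2 * (nuh i s - nubar i) * nuh_rate i s / (2 * glam i))).
  rewrite /est_energy -fct_sumE; apply: is_derive_sum => i.
  have [muh_der <-] := muh_ode i s s_gt0; have [nuh_der <-] := nuh_ode i s s_gt0.
  by apply: is_deriveD; apply: is_derive_sqr_sub_div; apply: derivableP.
exact: is_deriveB h_x_der est_der.
Qed.

(* The i-th summand of (V' + gamma V) - (Psi0 + Psi1 u0) - (h_x (f + fu) - M). *)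
Let surplus i s :=
  let y := x s in
  hx2 h y i * (dotv (theta i) (phi i y) + (g i y + dotv (lam i) (psi i y)) * u s i)
  - (2 * (muh i s - mubar i) * muh_rate i s / (2 * gth i)
     + 2 * (nuh i s - nubar i) * nuh_rate i s / (2 * glam i))
  - gamma * ((muh i s - mubar i) ^+ 2 / (2 * gth i)
             + (nuh i s - nubar i) ^+ 2 / (2 * glam i))
  - hx2 h y i * dotv (theta0 i) (phi i y)
  + (eps1 + eps2)
  + gamma * (mubar i ^+ 2 / (2 * gth i) + nubar i ^+ 2 / (2 * glam i))
  - hx2 h y i ^+ 2 * (g i y + dotv (lam0 i) (psi i y)) * u0 y 0 i.

Lemma surplus_ge0 i (s : R) : 0 <= s -> 0 <= h (x s) -> 0 <= surplus i s.
Proof.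
move=> s_ge0 hs; rewrite /surplus /u /ctrl /s_fun /muh_rate /nuh_rate.
set y := x s; set H := hx2 h y i; set v := u0 y 0 i.
set P := enorm (phi i y); set Q := enorm (psi i y).
set G := g i y + dotv (lam i) (psi i y); set G0 := g i y + dotv (lam0 i) (psi i y).
set mh := muh i s; set nh := nuh i s.
have mh_gt0 : 0 < mh := muh_gt0 i s_ge0; have nh_gt0 : 0 < nh := nuh_gt0 i s_ge0.
have b_le_G : b i <= G := b_le_gain i y hs.
have sqrH : H ^+ 2 = `|H| ^+ 2 by rewrite real_normK ?num_real.
have sqrv : v ^+ 2 = `|v| ^+ 2 by rewrite real_normK ?num_real.
have theta_dev : - (mubar i * (`|H| * P))
    <= H * (dotv (theta i) (phi i y) - dotv (theta0 i) (phi i y)).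
  by rewrite mulrCA; apply: mul_ge_oppr_normr_mul; apply: dotv_dev_le.
have lam_dev : - (nubar i * (H ^+ 2 * `|v| * Q)) <= H ^+ 2 * v * (G - G0).
  have -> : nubar i * (H ^+ 2 * `|v| * Q) = `|H ^+ 2 * v| * (nubar i * Q).
    by rewrite normrM ger0_norm ?sqr_ge0 //; ring.
  apply: mul_ge_oppr_normr_mul.
  by rewrite opprD addrACA subrr add0r; apply: dotv_dev_le.
have theta_robust :
    mh * (`|H| * P) - eps1 <= H ^+ 2 * G * (kappa1 mh P H eps1 / b i).
  have z_ge0 : 0 <= mh * (`|H| * P) by rewrite !mulr_ge0 ?enorm_ge0 // ltW.
  have -> : H ^+ 2 * G * (kappa1 mh P H eps1 / b i)
            = G / b i * ((mh * (`|H| * P)) ^+ 2 / (mh * (`|H| * P) + eps1)).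
    by rewrite /kappa1 sqrH; field; rewrite !gt_eqF ?ltr_wpDl.
  exact: sub_le_gain_sqr_div_add.
have lam_robust : nh * (H ^+ 2 * `|v| * Q) - eps2 <= H ^+ 2 * G *
    (kappa2 nh Q H ^+ 2 * v ^+ 2 / (b i * (kappa2 nh Q H * `|H| * `|v| + eps2))).
  have z_ge0 : 0 <= nh * (H ^+ 2 * `|v| * Q).
    by rewrite mulr_ge0 ?(ltW nh_gt0) // mulr_ge0 ?enorm_ge0 // mulr_ge0 ?sqr_ge0.
  have -> : H ^+ 2 * G *
      (kappa2 nh Q H ^+ 2 * v ^+ 2 / (b i * (kappa2 nh Q H * `|H| * `|v| + eps2)))
    = G / b i * ((nh * (H ^+ 2 * `|v| * Q)) ^+ 2 / (nh * (H ^+ 2 * `|v| * Q) + eps2)).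
    by rewrite /kappa2 sqrH sqrv; field; rewrite -sqrH !gt_eqF ?ltr_wpDl.
  exact: sub_le_gain_sqr_div_add.
have := adaptive_channel_ge0 (ltW gamma_gt0) (gth_gt0 i) theta_dev theta_robust.
have := adaptive_channel_ge0 (ltW gamma_gt0) (glam_gt0 i) lam_dev lam_robust.
move=> lam_ge0 theta_ge0; apply: le_trans (addr_ge0 theta_ge0 lam_ge0) _.
rewrite le_eqVlt; apply/orP; left; apply/eqP; ring.
Qed.

Lemma V_rate (s : R) : 0 < s -> 0 <= h (x s) ->
  derivable V s 1 /\ 0 <= 'D_1 V s + gamma * V s.
Proof.
move=> s_gt0 hs; have V_der := is_derive_V s_gt0.
split; first by case: V_der.
move: (V_der) => /@derive_val ->.
rewrite (proj2 (x_ode s s_gt0)) sum_partial_sys_rhs.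
set y := x s.
have M_le := Mfun_le_sum_partial h f (fu_in y).
have KBF := u0_in_KBF y hs; rewrite /Psi0 /Psi1u in KBF.
have surplus_sum_ge0 : 0 <= \sum_(i < n) surplus i s.
  by apply: sumr_ge0 => i _; apply: surplus_ge0 (ltW s_gt0) hs.
have surplus_sum : \sum_(i < n) surplus i s =
    \sum_(i < n) hx2 h y i *
      (dotv (theta i) (phi i y) + (g i y + dotv (lam i) (psi i y)) * u s i)
    - \sum_(i < n) (2 * (muh i s - mubar i) * muh_rate i s / (2 * gth i)
                    + 2 * (nuh i s - nubar i) * nuh_rate i s / (2 * glam i))
    - gamma * est_energy s
    - \sum_(i < n) hx2 h y i * dotv (theta0 i) (phi i y)
    + n%:R * (eps1 + eps2)
    + gamma * \sum_(i < n) (mubar i ^+ 2 / (2 * gth i) + nubar i ^+ 2 / (2 * glam i))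
    - \sum_(i < n) hx2 h y i ^+ 2 * (g i y + dotv (lam0 i) (psi i y)) * u0 y 0 i.
  have -> : n%:R * (eps1 + eps2) = \sum_(i < n) (eps1 + eps2).
    by rewrite sumr_const card_ord mulr_natl.
  rewrite /est_energy !mulr_sumr.
  by rewrite -3!sumrB -2!big_split -sumrB.
rewrite /V -/y; lra.
Qed.

Let init_margin i := muh i 0 * mubar i / gth i + nuh i 0 * nubar i / glam i.

Lemma init_margin_le_V0 : \sum_(i < n) init_margin i <= V 0.
Proof.
rewrite /V lerBrDr; apply: le_trans h_x0_ge; rewrite le_eqVlt; apply/orP; left.
rewrite /est_energy -big_split /=; apply/eqP/eq_bigr => i _.
by rewrite /init_margin; field; rewrite !gt_eqF.
Qed.

Lemma h_x_gt0 (t : R) : 0 <= t -> 0 < h (x t).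
Proof.
apply: (gt0_continuous_induction h_x_cont) => c c_ge0 h_pos.
pose E := expR (gamma * c); have E_gt0 : 0 < E := expR_gt0 _.
have V_grow : V 0 <= E * V c.
  apply: le_expR_mul_of_rate c_ge0 _ _.
    by apply: continuous_subspaceW V_cont; apply: subset_itv; rewrite ?bnd_simp.
  move=> s /andP[s_gt0 s_lt_c]; apply: (V_rate s_gt0).
  by apply/ltW/h_pos; rewrite (ltW s_gt0).
have term_gt0 i : 0 < init_margin i + E *
    ((muh i c - mubar i) ^+ 2 / (2 * gth i) + (nuh i c - nubar i) ^+ 2 / (2 * glam i)).
  have mu_term := estimate_term_gt0 (mb := mubar i) (muh0_gt0 i)
    (muh_gt0 i c_ge0) (sqrtr_ge0 _) (gth_gt0 i) E_gt0.
  have nu_term := estimate_term_gt0 (mb := nubar i) (nuh0_gt0 i)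
    (nuh_gt0 i c_ge0) (sqrtr_ge0 _) (glam_gt0 i) E_gt0.
  rewrite /init_margin; lra.
have margin_gt0 : 0 < \sum_(i < n) init_margin i + E * est_energy c.
  rewrite /est_energy mulr_sumr -big_split /= (bigD1 (Ordinal n_gt0)) //=.
  by apply: ltr_wpDr; [apply: sumr_ge0 => i _; apply/ltW |]; apply: term_gt0.
have := init_margin_le_V0; rewrite -(pmulr_rgt0 _ E_gt0) /=.
move: V_grow; rewrite /V; lra.
Qed.

End AdaptiveRobustBarrier.

Theorem theorem1 (R : realType) (m n : nat) (p q : 'I_n -> nat)
  (f fu fulo fuhi : 'rV[R]_(m + n) -> 'rV[R]_(m + n))
  (theta theta0 thlo thhi : forall i : 'I_n, 'I_(p i) -> R)
  (lam lam0 lamlo lamhi : forall i : 'I_n, 'I_(q i) -> R)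
  (phi : forall i : 'I_n, 'rV[R]_(m + n) -> 'I_(p i) -> R)
  (psi : forall i : 'I_n, 'rV[R]_(m + n) -> 'I_(q i) -> R)
  (g : 'I_n -> 'rV[R]_(m + n) -> R)
  (h : 'rV[R]_(m + n) -> R)
  (b : 'I_n -> R)
  (gamma eps1 eps2 : R) (gth glam : 'I_n -> R)
  (u0 : 'rV[R]_(m + n) -> 'rV[R]_n)
  (x : R -> 'rV[R]_(m + n)) (muh nuh : 'I_n -> R -> R) :
  (* standing regularity assumptions *)
  (0 < n)%N ->
  lipschitz f -> lipschitz fu ->
  (forall y, differentiable h y) ->
  (forall j, continuous (fun y => partial h y j)) ->
  (* Assumption A *)
  (forall y j, fulo y 0 j <= fu y 0 j <= fuhi y 0 j) ->
  (* Assumption B, and nominal values inside the boxes *)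
  (forall i j, thlo i j <= theta i j <= thhi i j) ->
  (forall i j, lamlo i j <= lam i j <= lamhi i j) ->
  (forall i j, thlo i j <= theta0 i j <= thhi i j) ->
  (forall i j, lamlo i j <= lam0 i j <= lamhi i j) ->
  (* Assumption C *)
  (forall i, 0 < b i) ->
  (forall i y, 0 <= h y -> b i <= g i y + dotv (lam i) (psi i y)) ->
  (* (ii) positive constants and non-emptiness of K_BF(x) on C *)
  0 < gamma -> 0 < eps1 -> 0 < eps2 ->
  (forall i, 0 < gth i) -> (forall i, 0 < glam i) ->
  let mubar i := bound_rad (thlo i) (thhi i) (theta0 i) in
  let nubar i := bound_rad (lamlo i) (lamhi i) (lam0 i) in
  let Psi0 y :=
    Mfun h f fulo fuhi y
    + \sum_(i < n) hx2 h y i * dotv (theta0 i) (phi i y)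
    - n%:R * (eps1 + eps2)
    + gamma * (h y - \sum_(i < n) (mubar i ^+ 2 / (2 * gth i)
                                   + nubar i ^+ 2 / (2 * glam i))) in
  let Psi1u y (v : 'I_n -> R) :=
    \sum_(i < n) hx2 h y i ^+ 2 * (g i y + dotv (lam0 i) (psi i y)) * v i in
  (forall y, 0 <= h y -> exists v : 'I_n -> R, 0 <= Psi0 y + Psi1u y v) ->
  (* (iii) u0 Lipschitz with u0(x) in K_BF(x) on C *)
  lipschitz u0 ->
  (forall y, 0 <= h y -> 0 <= Psi0 y + Psi1u y (fun i => u0 y 0 i)) ->
  (* closed-loop trajectory on [0, +oo) *)
  let u t i := ctrl (u0 (x t) 0 i) (muh i t) (nuh i t)
                    (enorm (phi i (x t))) (enorm (psi i (x t)))
                    (b i) (hx2 h (x t) i) eps1 eps2 in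
  {within `[0, +oo[, continuous x} ->
  (forall i, {within `[0, +oo[, continuous (muh i)}) ->
  (forall i, {within `[0, +oo[, continuous (nuh i)}) ->
  (forall t, 0 < t -> derivable x t 1 /\
     'D_1 x t = sys_rhs f fu theta phi g lam psi (x t) (u t)) ->
  (forall i t, 0 < t -> derivable (muh i) t 1 /\
     'D_1 (muh i) t = - gamma * muh i t
                      + gth i * `|hx2 h (x t) i| * enorm (phi i (x t))) ->
  (forall i t, 0 < t -> derivable (nuh i) t 1 /\
     'D_1 (nuh i) t = - gamma * nuh i t
                      + glam i * hx2 h (x t) i ^+ 2 * `|u0 (x t) 0 i|
                        * enorm (psi i (x t))) ->
  (forall i, 0 < muh i 0) -> (forall i, 0 < nuh i 0) ->
  (* (iv) initial condition *)
  \sum_(i < n) ((muh i 0 ^+ 2 + mubar i ^+ 2) / (2 * gth i)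
               + (nuh i 0 ^+ 2 + nubar i ^+ 2) / (2 * glam i)) <= h (x 0) ->
  forall t, 0 < t -> 0 <= h (x t).
Proof.
move=> n_gt0 _ _ h_diff _ fu_in theta_in lam_in theta0_in lam0_in b_gt0 b_le_gain
  gamma_gt0 eps1_gt0 eps2_gt0 gth_gt0 glam_gt0 mubar nubar Psi0 Psi1u _ _ u0_in_KBF u
  x_cont muh_cont nuh_cont x_ode muh_ode nuh_ode muh0_gt0 nuh0_gt0 h_x0_ge t t_gt0.
(* Lipschitz continuity, continuity of the gradient and non-emptiness of K_BF
   only make the closed loop well posed; here the trajectory is given. *)
apply/ltW/(h_x_gt0 n_gt0 h_diff fu_in theta_in lam_in theta0_in lam0_in b_gt0
  b_le_gain gamma_gt0 eps1_gt0 eps2_gt0 gth_gt0 glam_gt0 u0_in_KBF x_cont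
  muh_cont nuh_cont x_ode muh_ode nuh_ode muh0_gt0 nuh0_gt0 h_x0_ge).
exact: ltW.
Qed.
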